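(* Fix $p\in(0,1)$ and $q=1-p$. Let $\nu_n$ be the stationary law of the careless count chain on $\{0,\dots,n\}$. Then $\nu_n(n)\sim\frac{1}{(q;q)_\infty}\frac{n!}{n^n}q^{n(n+1)/2}$ as $n\to\infty$. Consequently, $\mu_n:=\mathbb P_{\nu_n}(K_0<n,K_1=n)=\nu_n(n)(1-q^n)\sim\frac{1}{(q;q)_\infty}\frac{n!}{n^n}q^{n(n+1)/2}$.
   Context: The careless count chain $(K_t)$ on $\{0,1,\dots,n\}$ is the Markov chain with transitions: given $K_t=k$, with probability $k/n$ one has $K_{t+1}\sim\mathrm{Bin}(k,q)$, and with probability $(n-k)/n$ one has $K_{t+1}\sim\mathrm{Bin}(k+1,q)$. (It is the number of held coupons in the careless collector where each round one uniformly drawn type is added and then each held coupon is independently lost with probability $p$.) It is irreducible and aperiodic with unique stationary law $\nu_n$. $(q;q)_\infty:=\prod_{r=1}^\infty(1-q^r)$. *)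

From mathcomp Require Import all_boot all_order all_algebra.
From mathcomp Require Import all_classical all_reals all_analysis.
Set Implicit Arguments. Unset Strict Implicit. Unset Printing Implicit Defensive.
Import Order.TTheory GRing.Theory Num.Theory.
Local Open Scope classical_set_scope.
Local Open Scope ring_scope.

Definition binpmf {R : realType} (q : R) (m j : nat) : R :=
  ('C(m, j))%:R * q ^+ j * (1 - q) ^+ (m - j).

Definition careless_P {R : realType} (q : R) (n k j : nat) : R :=
  (k%:R / n%:R) * binpmf q k j + ((n - k)%:R / n%:R) * binpmf q k.+1 j.

Definition is_stationary {R : realType} (q : R) (n : nat) (nu : nat -> R) : Prop :=
  (forall k, (k <= n)%N -> 0 <= nu k) /\
  \sum_(0 <= k < n.+1) nu k = 1 /\
  (forall j, (j <= n)%N -> nu j = \sum_(0 <= k < n.+1) nu k * careless_P q n k j).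

Definition qpoch_inf {R : realType} (q : R) : R :=
  lim ((fun N : nat => \prod_(1 <= r < N.+1) (1 - q ^+ r)) @ \oo).

Definition profile {R : realType} (q : R) (n : nat) : R :=
  (qpoch_inf q)^-1 * ((n`!)%:R / (n%:R ^+ n)) * q ^+ ((n * n.+1) %/ 2).

(* mu_n = P_nu(K_0 < n, K_1 = n) *)
Definition mu_of {R : realType} (q : R) (n : nat) (nu : nat -> R) : R :=
  \sum_(0 <= k < n) nu k * careless_P q n k n.

(* Let M_r = sum_k nu(k) C(k, r) be the binomial moments of a stationary law nu.
   One step of the chain adds a coupon with probability (n - k)/n and then thins
   binomially, which multiplies C(., r)-moments by q^r; stationarity therefore
   gives the recursion
     M_(r+1) (1 - q^(r+1) (1 - (r+1)/n)) = q^(r+1) (n - r)/n M_r.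
   As M_0 = 1 and M_n = nu(n), this yields nu(n) = (n!/n^n) q^(n(n+1)/2) / D_n
   with D_n = prod_(r=1..n) (1 - q^r (1 - r/n)).  The factors of D_n differ from
   those of prod_(r=1..n) (1 - q^r) by r q^r / n, so D_n tends to (q;q)_inf,
   which is positive.  Finally, state n stays at n with probability q^n, so
   stationarity at n reads nu(n) = mu_n + q^n nu(n). *)

From mathcomp Require Import all_boot all_order all_algebra.
From mathcomp Require Import all_classical all_reals all_analysis.
From mathcomp Require Import ring.
Import Order.TTheory GRing.Theory Num.Theory.
Import numFieldNormedType.Exports.
Local Open Scope classical_set_scope.
Local Open Scope ring_scope.

Section BinomialThinning.
Variables (R : realType) (q : R).

Lemma binpmfSS m j :
  binpmf q m.+1 j.+1 = (1 - q) * binpmf q m j.+1 + q * binpmf q m j.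
Proof.
rewrite /binpmf binS natrD subSS.
have [ltjm|lemj] := ltnP j m; first by rewrite -(subnSK ltjm) !exprS; ring.
rewrite (@bin_small m j.+1) ?ltnS // (eqP (_ : m - j == 0)%N) ?subn_eq0 //.
by rewrite !exprS; ring.
Qed.

Lemma binpmfS0 m : binpmf q m.+1 0 = (1 - q) * binpmf q m 0.
Proof. by rewrite /binpmf !bin0 !subn0 exprS; ring. Qed.

Lemma binpmf_eq0 m j : (m < j)%N -> binpmf q m j = 0.
Proof. by move=> ltmj; rewrite /binpmf bin_small // !mul0r. Qed.

Lemma sum_binpmfS (c : nat -> R) m N :
  \sum_(0 <= j < N.+1) c j * binpmf q m.+1 j =
  (1 - q) * \sum_(0 <= j < N.+1) c j * binpmf q m j +
  q * \sum_(0 <= j < N) c j.+1 * binpmf q m j.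
Proof.
rewrite !big_nat_recl // binpmfS0.
under eq_bigr do
  rewrite binpmfSS mulrDr [c _ * ((1 - q) * _)]mulrCA [c _ * (q * _)]mulrCA.
by rewrite big_split /= -!mulr_sumr; ring.
Qed.

Lemma sum_bin_binpmf m r N : (m < N)%N ->
  \sum_(0 <= j < N) 'C(j, r)%:R * binpmf q m j = 'C(m, r)%:R * q ^+ r.
Proof.
elim: m r N => [|m IHm] r [|N] //= ltmN.
  rewrite big_nat_recl // big1_seq => [|j _]; last by rewrite binpmf_eq0 ?mulr0.
  rewrite /binpmf !bin0 subn0 !expr0 !mulr1 addr0.
  by case: r => [|r]; rewrite ?expr0 ?mulr1 // bin_small // mul0r.
rewrite sum_binpmfS IHm ?(ltnW ltmN) //.
case: r => [|r].
  have bin0S j : 'C(j.+1, 0) = 'C(j, 0) by rewrite !bin0.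
  under eq_bigr do rewrite bin0S.
  by rewrite IHm // !bin0 !expr0 !mulr1; ring.
under eq_bigr do rewrite binS natrD mulrDl.
by rewrite big_split /= !IHm // binS natrD exprS; ring.
Qed.

End BinomialThinning.

Definition bin_moment {R : ringType} n (nu : nat -> R) r :=
  \sum_(0 <= k < n.+1) nu k * 'C(k, r)%:R.

Definition moment_factor {R : fieldType} (q : R) n r := 1 - q ^+ r * (1 - r%:R / n%:R).

Definition moment_denom {R : fieldType} (q : R) n :=
  \prod_(0 <= i < n) moment_factor q n i.+1.

Lemma natr_mul_bin_left {R : ringType} k s :
  s.+1%:R * 'C(k, s.+1)%:R = (k%:R - s%:R) * 'C(k, s)%:R :> R.
Proof.
have [lesk|ltks] := leqP s k; first by rewrite -natrB // -!natrM mul_bin_left.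
by rewrite (bin_small ltks) (@bin_small k s.+1 (ltnW ltks)) !mulr0n !mulr0.
Qed.

Section StationaryMoments.
Context {R : realType} {q : R} {n : nat}.

Lemma sum_bin_careless_P r k : (k <= n)%N ->
  \sum_(0 <= j < n.+1) 'C(j, r)%:R * careless_P q n k j =
  q ^+ r * (k%:R / n%:R * 'C(k, r)%:R + (n - k)%:R / n%:R * 'C(k.+1, r)%:R).
Proof.
move=> lekn; rewrite /careless_P.
under eq_bigr do rewrite mulrDr [_ * (k%:R / _ * _)]mulrCA [_ * ((n - k)%:R / _ * _)]mulrCA.
rewrite big_split /= -!mulr_sumr sum_bin_binpmf ?ltnS //.
have [ltkn|] := ltnP k n; first by rewrite sum_bin_binpmf ?ltnS //; ring.
rewrite leq_eqVlt ltnNge lekn orbF => /eqP->.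
by rewrite subnn !mul0r; ring.
Qed.

Context {nu : nat -> R}.
Hypothesis nu_stat : is_stationary q n nu.

Lemma stationary_expectation (f : nat -> R) :
  \sum_(0 <= j < n.+1) f j * nu j =
  \sum_(0 <= k < n.+1) nu k * \sum_(0 <= j < n.+1) f j * careless_P q n k j.
Proof.
have [_ [_ nuE]] := nu_stat.
under eq_big_nat => j /andP[_ ltjn] do rewrite nuE // mulr_sumr.
rewrite exchange_big /=; apply: eq_bigr => k _.
by rewrite mulr_sumr; apply: eq_bigr => j _; rewrite mulrCA.
Qed.

Hypothesis n_gt0 : (0 < n)%N.

Lemma bin_momentS s :
  bin_moment n nu s.+1 * moment_factor q n s.+1 =
  q ^+ s.+1 * ((n%:R - s%:R) / n%:R) * bin_moment n nu s.
Proof.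
have n0 : n%:R != 0 :> R by rewrite pnatr_eq0 -lt0n.
suff e : bin_moment n nu s.+1 =
    q ^+ s.+1 * (1 - s.+1%:R / n%:R) * bin_moment n nu s.+1 +
    q ^+ s.+1 * ((n%:R - s%:R) / n%:R) * bin_moment n nu s.
  by rewrite /moment_factor mulrBr mulr1 {1}e; ring.
rewrite {1}/bin_moment (eq_bigr _ (fun k _ => mulrC _ _)) stationary_expectation.
rewrite /bin_moment !mulr_sumr -big_split /=.
apply: eq_big_nat => k /andP[_]; rewrite ltnS => lekn.
rewrite sum_bin_careless_P // binS natrD natrB //.
apply/eqP; rewrite -subr_eq0; apply/eqP.
transitivity (q ^+ s.+1 * nu k / n%:R *
  (s.+1%:R * 'C(k, s.+1)%:R - (k%:R - s%:R) * 'C(k, s)%:R)); first by field.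
by rewrite natr_mul_bin_left subrr mulr0.
Qed.

Lemma bin_moment0 : bin_moment n nu 0 = 1.
Proof.
have [_ [<- _]] := nu_stat.
by apply: eq_bigr => k _; rewrite bin0 mulr1.
Qed.

Lemma bin_moment_prod r :
  bin_moment n nu r * \prod_(0 <= i < r) moment_factor q n i.+1 =
  \prod_(0 <= i < r) (q ^+ i.+1 * ((n%:R - i%:R) / n%:R)).
Proof.
elim: r => [|r IHr]; first by rewrite !big_geq // bin_moment0 mulr1.
by rewrite !big_nat_recr //= -IHr [LHS]mulrA [LHS]mulrAC bin_momentS; ring.
Qed.

End StationaryMoments.

Lemma bin_moment_top {R : ringType} n (nu : nat -> R) : bin_moment n nu n = nu n.
Proof.
rewrite /bin_moment big_nat_recr //= big1_seq ?binn ?mulr1 ?add0r // => k.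
by rewrite mem_index_iota => /andP[_ ltkn]; rewrite bin_small // mulr0.
Qed.

Lemma sum_succ_half n : (\sum_(0 <= i < n) i.+1 = n * n.+1 %/ 2)%N.
Proof.
by rewrite -[LHS]add0n -(big_nat_recl _ _ id) // bin2_sum bin2 -divn2 mulnC.
Qed.

Lemma prod_moment_ratio_closed {R : fieldType} (q : R) n :
  \prod_(0 <= i < n) (q ^+ i.+1 * ((n%:R - i%:R) / n%:R)) =
  n`!%:R / n%:R ^+ n * q ^+ (n * n.+1 %/ 2).
Proof.
rewrite big_split /= prodrXr sum_succ_half mulrC; congr (_ * _).
rewrite big_split /= prodr_const_nat subn0 exprVn -ffactnn ffact_prod natr_prod big_mkord.
by congr (_ * _); apply: eq_bigr => i _; rewrite natrB // ltnW.
Qed.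

Section ProductsNearOne.
Variables (R : realDomainType) (I : eqType).
Implicit Types (s : seq I) (F G x : I -> R).

Lemma norm_prod_le1 s F :
  {in s, forall i, `|F i| <= 1} -> `|\prod_(i <- s) F i| <= 1.
Proof.
move=> F1; rewrite normr_prod big_seq.
by apply: prodr_ile1 => i si; rewrite normr_ge0 F1.
Qed.

Lemma norm_prodB_le s F G :
  {in s, forall i, `|F i| <= 1} -> {in s, forall i, `|G i| <= 1} ->
  `|\prod_(i <- s) F i - \prod_(i <- s) G i| <= \sum_(i <- s) `|F i - G i|.
Proof.
elim: s => [|i s IHs] F1 G1; first by rewrite !big_nil subrr normr0.
have F1s : {in s, forall j, `|F j| <= 1} by move=> j sj; rewrite F1 // inE sj orbT.
have G1s : {in s, forall j, `|G j| <= 1} by move=> j sj; rewrite G1 // inE sj orbT.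
rewrite !big_cons.
set PF := \prod_(j <- s) F j; set PG := \prod_(j <- s) G j.
have -> : F i * PF - G i * PG = (F i - G i) * PF + G i * (PF - PG) by ring.
apply: le_trans (ler_normD _ _) _; rewrite !normrM.
apply: lerD; first by rewrite ler_piMr ?norm_prod_le1.
by apply: le_trans (IHs F1s G1s); rewrite ler_piMl ?G1 ?mem_head.
Qed.

Lemma prod_1subr_ge s x : {in s, forall i, 0 <= x i <= 1} ->
  1 - \sum_(i <- s) x i <= \prod_(i <- s) (1 - x i).
Proof.
move=> x01.
have x1 : {in s, forall i, `|1 - x i| <= 1}.
  by move=> i /x01/andP[x0 x1]; rewrite ger0_norm ?subr_ge0 // lerBlDr lerDl.
have one1 : {in s, forall i : I, `|1 : R| <= 1} by move=> i _; rewrite normr1.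
have := @norm_prodB_le s (fun i => 1 - x i) (fun _ => 1) x1 one1.
rewrite big1_eq (@eq_big_seq _ _ _ _ s (fun i => `|1 - x i - 1|) x).
  exact: ler_distlCBl.
by move=> i /x01/andP[x0 _]; rewrite addrAC subrr add0r normrN ger0_norm.
Qed.

End ProductsNearOne.

Definition qpoch_partial {R : ringType} (q : R) N := \prod_(0 <= i < N) (1 - q ^+ i.+1).

Lemma qpoch_infE {R : realType} (q : R) : qpoch_inf q = lim (qpoch_partial q @ \oo).
Proof.
rewrite /qpoch_inf (_ : (fun N => _) = qpoch_partial q) //.
by apply: funext => N; rewrite /qpoch_partial big_add1.
Qed.

Section QPochhammer.
Context {R : realType} {q : R}.
Hypotheses (q_ge0 : 0 <= q) (q_lt1 : q < 1).

Lemma exprn_itv01 r : 0 <= q ^+ r <= 1.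
Proof. by rewrite exprn_ge0 // exprn_ile1 // ltW. Qed.

Lemma qpoch_partial_gt0 N : 0 < qpoch_partial q N.
Proof. by apply: prodr_gt0 => i _; rewrite subr_gt0 exprn_ilt1. Qed.

Lemma qpoch_partial_noninc : nonincreasing_seq (qpoch_partial q).
Proof.
apply/nonincreasing_seqP => N; rewrite /qpoch_partial big_nat_recr //=.
by rewrite ler_piMr ?(ltW (qpoch_partial_gt0 N)) // lerBlDr lerDl exprn_ge0.
Qed.

Lemma sum_geom_range N k :
  (1 - q) * \sum_(N <= i < N + k) q ^+ i.+1 = q ^+ N.+1 - q ^+ (N + k).+1.
Proof.
elim: k => [|k IHk]; first by rewrite addn0 big_geq // mulr0 subrr.
by rewrite addnS big_nat_recr ?leq_addr //= mulrDr IHk !exprS; ring.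
Qed.

Lemma qpoch_partial_tail N k :
  qpoch_partial q N * (1 - q ^+ N.+1 / (1 - q)) <= qpoch_partial q (N + k).
Proof.
have q1 : 0 < 1 - q by rewrite subr_gt0.
rewrite /qpoch_partial (big_cat_nat _ (leq_addr k N)) //=.
rewrite ler_wpM2l ?(ltW (qpoch_partial_gt0 N)) //.
apply: le_trans (@prod_1subr_ge _ _ _ (fun i => q ^+ i.+1) _) => [|i _]; last first.
  exact: exprn_itv01.
by rewrite lerB // ler_pdivlMr // mulrC sum_geom_range gerBl exprn_ge0.
Qed.

Lemma qpoch_partial_lbound : exists2 c, 0 < c & forall N, c <= qpoch_partial q N.
Proof.
have q1 : 0 < 1 - q by rewrite subr_gt0.
have [N0 qN0] : exists N0, q ^+ N0.+1 < 1 - q.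
  have normq_lt1 : `|q| < 1 by rewrite ger0_norm.
  have /cvgr0_norm_lt/(_ _ q1) [N0 _ qN_small] := cvg_expr normq_lt1.
  by exists N0; have := qN_small N0.+1 (leqnSn N0); rewrite ger0_norm ?exprn_ge0.
exists (qpoch_partial q N0 * (1 - q ^+ N0.+1 / (1 - q))).
  by rewrite mulr_gt0 ?qpoch_partial_gt0 // subr_gt0 ltr_pdivrMr // mul1r.
move=> N; have [leN0N|ltNN0] := leqP N0 N.
  by rewrite -(subnKC leN0N) qpoch_partial_tail.
apply: le_trans _ (qpoch_partial_noninc _ _ (ltnW ltNN0)).
by rewrite ler_piMr ?(ltW (qpoch_partial_gt0 N0)) // gerBl divr_ge0 ?exprn_ge0 ?(ltW q1).
Qed.

Lemma qpoch_partial_cvg : qpoch_partial q @ \oo --> qpoch_inf q.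
Proof.
have lb : has_lbound (range (qpoch_partial q)).
  by exists 0 => _ [N _ <-]; apply: ltW (qpoch_partial_gt0 N).
have cvgQ := nonincreasing_cvgn qpoch_partial_noninc lb.
by rewrite qpoch_infE (cvg_lim _ cvgQ).
Qed.

Lemma qpoch_inf_gt0 : 0 < qpoch_inf q.
Proof.
have [c c_gt0 lec] := qpoch_partial_lbound.
apply: lt_le_trans c_gt0 _; rewrite qpoch_infE.
by apply: limr_ge; [exact: cvgP qpoch_partial_cvg | exact: nearW].
Qed.

End QPochhammer.

Section MomentDenominator.
Context {R : realType} {q : R}.
Hypotheses (q_ge0 : 0 <= q) (q_lt1 : q < 1).

Lemma moment_factor_gt0 n r : 0 < moment_factor q n r.+1.
Proof.
rewrite /moment_factor subr_gt0; apply: (@le_lt_trans _ _ (q ^+ r.+1)).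
  by rewrite ler_piMr ?exprn_ge0 // gerBl divr_ge0.
by rewrite exprn_ilt1.
Qed.

Lemma moment_factor_le1 n r : (r < n)%N -> moment_factor q n r.+1 <= 1.
Proof.
move=> ltrn; have n_gt0 : 0 < n%:R :> R by rewrite ltr0n (leq_ltn_trans _ ltrn).
rewrite /moment_factor gerBl mulr_ge0 ?exprn_ge0 // subr_ge0.
by rewrite ler_pdivrMr // mul1r ler_nat.
Qed.

Lemma moment_denom_gt0 n : 0 < moment_denom q n.
Proof. by apply: prodr_gt0 => i _; apply: moment_factor_gt0. Qed.

Lemma sum_arith_geom n : (1 - q) ^+ 2 * \sum_(0 <= i < n) i.+1%:R * q ^+ i.+1 =
  q - n.+1%:R * q ^+ n.+1 + n%:R * q ^+ n.+2.
Proof.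
elim: n => [|n IHn]; first by rewrite big_geq // mulr0 expr1 mul1r mul0r subrr addr0.
by rewrite big_nat_recr //= mulrDr IHn -!natr1 !exprS; ring.
Qed.

Lemma sum_arith_geom_le n : (1 - q) ^+ 2 * \sum_(0 <= i < n) i.+1%:R * q ^+ i.+1 <= 1.
Proof.
rewrite sum_arith_geom.
have h1 : n%:R * q ^+ n.+2 <= n%:R * q ^+ n.+1.
  by rewrite ler_wpM2l // [q ^+ n.+2]exprS ler_piMl ?exprn_ge0 ?(ltW q_lt1).
have h2 : n%:R * q ^+ n.+1 <= n.+1%:R * q ^+ n.+1 by rewrite ler_wpM2r ?exprn_ge0 // ler_nat.
apply: le_trans (ltW q_lt1); rewrite -addrA gerDl addrC subr_le0.
exact: le_trans h1 h2.
Qed.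

Lemma moment_denom_dist n : (0 < n)%N ->
  `|moment_denom q n - qpoch_partial q n| <= ((1 - q) ^+ 2)^-1 / n%:R.
Proof.
move=> n_gt0; have n0 : 0 < n%:R :> R by rewrite ltr0n.
apply: le_trans (@norm_prodB_le _ _ (index_iota 0 n)
  (fun i => moment_factor q n i.+1) (fun i => 1 - q ^+ i.+1) _ _) _.
- move=> i; rewrite mem_index_iota => /andP[_ ltin].
  by rewrite ger0_norm ?moment_factor_le1 // ltW ?moment_factor_gt0.
- move=> i _; have /andP[qi0 qi1] := exprn_itv01 q_ge0 q_lt1 i.+1.
  by rewrite ger0_norm ?subr_ge0 // gerBl.
rewrite (eq_bigr (fun i => i.+1%:R * q ^+ i.+1 / n%:R)) => [|i _]; last first.
  have -> : moment_factor q n i.+1 - (1 - q ^+ i.+1) = i.+1%:R * q ^+ i.+1 / n%:R.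
    by rewrite /moment_factor; ring.
  by rewrite ger0_norm // divr_ge0 // mulr_ge0 ?exprn_ge0.
have q1 : 0 < (1 - q) ^+ 2 by rewrite exprn_gt0 // subr_gt0.
rewrite -mulr_suml ler_pM2r ?invr_gt0 // -(ler_pM2l q1) mulfV ?lt0r_neq0 //.
exact: sum_arith_geom_le.
Qed.

Lemma moment_denom_cvg : moment_denom q @ \oo --> qpoch_inf q.
Proof.
set K := ((1 - q) ^+ 2)^-1.
have K_over_n : (fun n => K / n%:R) @ \oo --> 0.
  have Kh : K * harmonic n @[n --> \oo] --> K * 0 by apply: cvgMl_tmp; exact: cvg_harmonic.
  by rewrite mulr0 in Kh; rewrite -cvg_shiftS.
have dist0 : (fun n => moment_denom q n - qpoch_partial q n) @ \oo --> 0.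
  apply: norm_cvg0; apply: (squeeze_cvgr _ (cvg_cst 0) K_over_n).
  near=> n; rewrite normr_ge0 moment_denom_dist //.
  by near: n; exact: nbhs_infty_gt.
have -> : moment_denom q = (fun n => moment_denom q n - qpoch_partial q n + qpoch_partial q n).
  by apply: funext => n; rewrite subrK.
by rewrite -[qpoch_inf q]add0r; apply: cvgD => //; exact: qpoch_partial_cvg.
Unshelve. all: by end_near.
Qed.

End MomentDenominator.

Section TopState.
Context {R : realType} {q : R} {n : nat} {nu : nat -> R}.
Hypotheses (n_gt0 : (0 < n)%N) (nu_stat : is_stationary q n nu).

Lemma stationary_top_mul_denom :
  nu n * moment_denom q n = n`!%:R / n%:R ^+ n * q ^+ (n * n.+1 %/ 2).
Proof.
by rewrite -prod_moment_ratio_closed -(bin_moment_prod nu_stat n_gt0 n) bin_moment_top.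
Qed.

Lemma stationary_top_over_profile : 0 < q -> q < 1 ->
  nu n / profile q n = qpoch_inf q / moment_denom q n.
Proof.
move=> q_gt0 q_lt1.
have D_gt0 := moment_denom_gt0 (ltW q_gt0) q_lt1 n.
have Q_gt0 := qpoch_inf_gt0 (ltW q_gt0) q_lt1.
have c_gt0 : 0 < n`!%:R / n%:R ^+ n * q ^+ (n * n.+1 %/ 2).
  by rewrite !mulr_gt0 ?invr_gt0 ?exprn_gt0 ?ltr0n ?fact_gt0.
have nu_gt0 : 0 < nu n by rewrite -(pmulr_lgt0 _ D_gt0) stationary_top_mul_denom.
rewrite /profile -mulrA -stationary_top_mul_denom.
by field; rewrite !lt0r_neq0.
Qed.

Lemma mu_ofE : mu_of q n nu = nu n * (1 - q ^+ n).
Proof.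
have [_ [_ nuE]] := nu_stat.
have Pnn : careless_P q n n n = q ^+ n.
  rewrite /careless_P subnn divff ?pnatr_eq0 -?lt0n // !mul0r addr0 mul1r.
  by rewrite /binpmf binn subnn expr0 !mulr1 mul1r.
by rewrite mulrBr mulr1 {1}nuE // big_nat_recr //= Pnn /mu_of addrK.
Qed.

End TopState.

Lemma cvg_1subrX {R : realType} {q : R} : `|q| < 1 -> 1 - q ^+ n @[n --> \oo] --> (1 : R).
Proof.
move=> normq_lt1; rewrite -[X in _ --> X]subr0.
by apply: cvgB; [exact: cvg_cst | exact: cvg_expr].
Qed.

Section Asymptotics.
Context {R : realType} {q : R} {nu : nat -> nat -> R}.
Hypotheses (q_gt0 : 0 < q) (q_lt1 : q < 1).
Hypothesis nu_stat : forall n, (0 < n)%N -> is_stationary q n (nu n).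

Lemma stationary_top_asymptotics : nu n n / profile q n @[n --> \oo] --> (1 : R).
Proof.
have Q_neq0 := lt0r_neq0 (qpoch_inf_gt0 (ltW q_gt0) q_lt1).
have : qpoch_inf q * (moment_denom q n)^-1 @[n --> \oo] --> qpoch_inf q * (qpoch_inf q)^-1.
  by apply: cvgMl_tmp; apply: cvgV => //; exact: moment_denom_cvg (ltW q_gt0) q_lt1.
rewrite divff // => Q_over_D; apply: cvg_trans Q_over_D; apply: near_eq_cvg.
near=> n; have n_gt0 : (0 < n)%N by near: n; exact: nbhs_infty_gt.
by rewrite /= (stationary_top_over_profile n_gt0 (nu_stat n n_gt0)).
Unshelve. all: by end_near.
Qed.

Lemma mu_of_asymptotics : mu_of q n (nu n) / profile q n @[n --> \oo] --> (1 : R).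
Proof.
have normq_lt1 : `|q| < 1 by rewrite ger0_norm ?ltW.
have top_pow_cvg : nu n n / profile q n * (1 - q ^+ n) @[n --> \oo] --> (1 : R).
  by rewrite -[X in _ --> X](mulr1 1); apply: cvgM;
    [exact: stationary_top_asymptotics | exact: cvg_1subrX].
apply: cvg_trans top_pow_cvg; apply: near_eq_cvg.
near=> n; have n_gt0 : (0 < n)%N by near: n; exact: nbhs_infty_gt.
by rewrite /= (mu_ofE n_gt0 (nu_stat n n_gt0)) mulrAC.
Unshelve. all: by end_near.
Qed.

End Asymptotics.

Theorem mainTheorem6 (R : realType) (p : R) (hp0 : 0 < p) (hp1 : p < 1)
  (nu : nat -> nat -> R)
  (hnu : forall n : nat, (1 <= n)%N -> is_stationary (1 - p) n (nu n)) :
  ((fun n : nat => nu n n / profile (1 - p) n) @ \oo --> (1 : R^o)) /\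
  (forall n : nat, (1 <= n)%N ->
     mu_of (1 - p) n (nu n) = nu n n * (1 - (1 - p) ^+ n)) /\
  ((fun n : nat => mu_of (1 - p) n (nu n) / profile (1 - p) n) @ \oo --> (1 : R^o)).
Proof.
have q_gt0 : 0 < 1 - p by rewrite subr_gt0.
have q_lt1 : 1 - p < 1 by rewrite ltrBlDr ltrDl.
split; first exact: stationary_top_asymptotics.
split; last exact: mu_of_asymptotics.
by move=> n n_gt0; exact: mu_ofE n_gt0 (hnu n n_gt0).
Qed.
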